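(* For all graphs $G$ and $H$: if $G$ and $H$ are distinguishable by NC-1WL, then they are distinguishable by EB-1WL.
   Context: All graphs are finite, simple and undirected, without isolated vertices; $N(v)$ denotes the neighborhood of $v$. An ordered edge of $G=(V,E)$ is a pair $(u,v)$ with $\{u,v\}\in E$. EB-1WL coloring: $\mathrm{eb}^{(0)}(G,(u,v))=1$ for every ordered edge, and $\mathrm{eb}^{(\ell+1)}(G,(u,v)) = \big(\mathrm{eb}^{(\ell)}(G,(u,v)),\ \{\!\{\mathrm{eb}^{(\ell)}(G,(u,x)) : x\in N(u)\}\!\},\ \{\!\{(\mathrm{eb}^{(\ell)}(G,(u,y)),\mathrm{eb}^{(\ell)}(G,(v,y))) : y\in N(u)\cap N(v)\}\!\},\ \{\!\{\mathrm{eb}^{(\ell)}(G,(v,z)) : z\in N(v)\}\!\}\big)$. $\mathrm{eb}^{(\ell)}(G)$ is the multiset of $\mathrm{eb}^{(\ell)}(G,(u,v))$ over all ordered edges. $G$ and $H$ are distinguishable by EB-1WL if $|V(G)|\neq|V(H)|$ or there is $\ell$ with $\mathrm{eb}^{(\ell)}(G)\neq\mathrm{eb}^{(\ell)}(H)$. NC-1WL coloring of vertices: $\mathrm{nc}^{(0)}(G,v)=1$ and $\mathrm{nc}^{(\ell+1)}(G,v)=\big(\mathrm{nc}^{(\ell)}(G,v),\ \{\!\{\mathrm{nc}^{(\ell)}(G,u): u\in N(v)\}\!\},\ \{\!\{(\mathrm{nc}^{(\ell)}(G,u),\mathrm{nc}^{(\ell)}(G,w)) : u,w\in N(v),\ \{u,w\}\in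 E\}\!\}\big)$. $\mathrm{nc}^{(\ell)}(G)=\{\!\{\mathrm{nc}^{(\ell)}(G,v): v\in V\}\!\}$. $G$ and $H$ are distinguishable by NC-1WL if there is $\ell$ with $\mathrm{nc}^{(\ell)}(G)\neq\mathrm{nc}^{(\ell)}(H)$. Colors are nested tuples/multisets, comparable across graphs. *)

From mathcomp Require Import all_boot.
Set Implicit Arguments. Unset Strict Implicit. Unset Printing Implicit Defensive.

(* Colors are nested tuples / multisets, encoded as generic trees over nat
   (a countType, so colors from different graphs are comparable by Leibniz
   equality).  A multiset is encoded canonically by sorting its elements
   w.r.t. the injective encoding [pickle]; hence two lists give the same
   multiset color iff they are permutations of each other. *)
Definition color := GenTree.tree nat.

Definition cinit : color := GenTree.Leaf 1.
Definition mset (s : seq color) : color :=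
  GenTree.Node 1 (sort (fun x y : color => pickle x <= pickle y) s).
Definition cpair (a b : color) : color := GenTree.Node 2 [:: a; b].
Definition ctuple (s : seq color) : color := GenTree.Node 0 s.

Definition simple_graph (V : finType) (e : rel V) : Prop :=
  irreflexive e /\ symmetric e /\ (forall v : V, exists u : V, e v u).

Definition nbhd (V : finType) (e : rel V) (v : V) : seq V :=
  [seq x <- enum V | e v x].

(* EB-1WL colour of the ordered pair (u,v) (meaningful on ordered edges). *)
Fixpoint eb (V : finType) (e : rel V) (l : nat) (u v : V) : color :=
  match l with
  | 0 => cinit
  | l'.+1 =>
      ctuple [:: eb e l' u v;
                 mset [seq eb e l' u x | x <- nbhd e u];
                 mset [seq cpair (eb e l' u y) (eb e l' v y)
                      | y <- [seq y <- nbhd e u | e v y]];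
                 mset [seq eb e l' v z | z <- nbhd e v]]
  end.

Definition eb_graph (V : finType) (e : rel V) (l : nat) : color :=
  mset [seq eb e l p.1 p.2 | p <- enum [pred p : V * V | e p.1 p.2]].

Fixpoint nc (V : finType) (e : rel V) (l : nat) (v : V) : color :=
  match l with
  | 0 => cinit
  | l'.+1 =>
      ctuple [:: nc e l' v;
                 mset [seq nc e l' u | u <- nbhd e v];
                 mset [seq cpair (nc e l' p.1) (nc e l' p.2)
                      | p <- enum [pred p : V * V |
                                   [&& e v p.1, e v p.2 & e p.1 p.2]]]]
  end.

Definition nc_graph (V : finType) (e : rel V) (l : nat) : color :=
  mset [seq nc e l v | v <- enum V].

Definition eb_distinguishable (V W : finType) (eG : rel V) (eH : rel W) : Prop :=
  #|V| <> #|W| \/ exists l : nat, eb_graph eG l <> eb_graph eH l.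

Definition nc_distinguishable (V W : finType) (eG : rel V) (eH : rel W) : Prop :=
  exists l : nat, nc_graph eG l <> nc_graph eH l.

From mathcomp Require Import all_boot.
Set Implicit Arguments. Unset Strict Implicit. Unset Printing Implicit Defensive.

(* The NC-1WL colour of v after l rounds is a graph-independent function
   [nc_decode l] of the multiset of EB-1WL colours of the edges leaving v after
   2l rounds: the EB colour of (v, x) records the neighbourhood multiset of x
   one round earlier and, through its triangle term, that of every common
   neighbour of v and x, so one NC round costs two EB rounds.  The EB colour of
   an ordered edge (u, v) after 2l + 1 rounds contains that multiset for u, so
   equal EB graph colours give equal multisets of it over ordered edges, i.e.
   over vertices counted with their degree.  The degree is the size of the
   multiset itself and no vertex is isolated, so the degrees cancel. *)

Definition pickle_le (x y : color) := pickle x <= pickle y.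

Lemma pickle_le_total : total pickle_le.
Proof. by move=> x y; exact: leq_total. Qed.

Lemma pickle_le_trans : transitive pickle_le.
Proof. by move=> x y z; exact: leq_trans. Qed.

Lemma pickle_le_anti : antisymmetric pickle_le.
Proof. by move=> x y /anti_leq /(pcan_inj pickleK). Qed.

Lemma mset_perm (s t : seq color) : perm_eq s t -> mset s = mset t.
Proof.
move=> st; congr GenTree.Node.
exact: (perm_sortP pickle_le_total pickle_le_trans pickle_le_anti).
Qed.

Lemma mset_inj (s t : seq color) : mset s = mset t -> perm_eq s t.
Proof. by case=> /(perm_sortP pickle_le_total pickle_le_trans pickle_le_anti). Qed.

Definition children (c : color) : seq color :=
  if c is GenTree.Node _ s then s else [::].
Arguments children : simpl never.

Definition child (i : nat) (c : color) : color := nth cinit (children c) i.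

Lemma perm_children_mset (s : seq color) : perm_eq (children (mset s)) s.
Proof. by rewrite /children perm_sort. Qed.

Lemma mset_map_children_mset (f : color -> color) (s : seq color) :
  mset (map f (children (mset s))) = mset (map f s).
Proof. exact/mset_perm/perm_map/perm_children_mset. Qed.

Lemma child1_cpair (a b : color) : child 1 (cpair a b) = b.
Proof. by []. Qed.

Lemma filter_allpairs (T : Type) (A : pred T) (B : T -> pred T) (s t : seq T) :
  [seq p <- [seq (x, y) | x <- s, y <- t] | A p.1 && B p.1 p.2]
  = [seq (x, y) | x <- [seq x <- s | A x], y <- [seq y <- t | B x y]].
Proof.
elim: s => //= x s IH; rewrite filter_cat IH filter_map.
case Ax: (A x) => /=.
  by congr (_ ++ _); congr map; apply: eq_filter => y /=; rewrite Ax.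
by rewrite (@eq_filter _ _ pred0) ?filter_pred0 // => y /=; rewrite Ax.
Qed.

Lemma count_allpairs_const (S T : Type) (R : eqType) (f : S -> R)
    (w : R -> nat) (s : seq S) (t : S -> seq T) :
  (forall x, size (t x) = w (f x)) ->
  forall c, count_mem c [seq f x | x <- s, _ <- t x]
            = count_mem c (map f s) * w c.
Proof.
move=> size_t c; elim: s => //= x s IH.
rewrite count_cat IH mulnDl; congr (_ + _).
have -> : [seq f x | _ <- t x] = nseq (size (t x)) (f x).
  by elim: (t x) => //= ? ? ->.
by rewrite count_nseq size_t /=; case: eqP => [->|].
Qed.

Lemma perm_eq_weighted (T : eqType) (w : T -> nat) (s t : seq T) :
  {in s ++ t, forall c, 0 < w c} ->
  (forall c, count_mem c s * w c = count_mem c t * w c) -> perm_eq s t.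
Proof.
move=> w_gt0 count_w; apply/allP => c /w_gt0 wc /=.
by rewrite -(eqn_pmul2r wc) count_w.
Qed.

Lemma enum_prod_filter (V : finType) (A : pred V) (B : V -> pred V) :
  enum [pred p : V * V | A p.1 && B p.1 p.2]
  = [seq (x, y) | x <- [seq x <- enum V | A x], y <- [seq y <- enum V | B x y]].
Proof. by rewrite {1}/enum_mem unlock; exact: filter_allpairs. Qed.

Lemma enum_edges (V : finType) (e : rel V) :
  enum [pred p : V * V | e p.1 p.2] = [seq (x, y) | x <- enum V, y <- nbhd e x].
Proof.
by rewrite -[in RHS](filter_predT (enum V)); exact: (enum_prod_filter predT e).
Qed.

Lemma enum_triangles_at (V : finType) (e : rel V) (v : V) :
  enum [pred p : V * V | [&& e v p.1, e v p.2 & e p.1 p.2]]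
  = [seq (x, y) | x <- nbhd e v, y <- [seq y <- nbhd e v | e x y]].
Proof.
rewrite (enum_prod_filter (e v) (fun x y => e v y && e x y)).
congr flatten; apply: eq_map => x; congr map.
by rewrite /nbhd -filter_predI; apply: eq_filter => y; exact: andbC.
Qed.

Lemma nbhd_gt0 (V : finType) (e : rel V) (v : V) :
  (exists u, e v u) -> 0 < size (nbhd e v).
Proof.
case=> u vu; rewrite /nbhd size_filter -has_count.
by apply/hasP; exists u; rewrite ?mem_enum.
Qed.

Definition eb_nbhd (V : finType) (e : rel V) (k : nat) (v : V) : color :=
  mset [seq eb e k v x | x <- nbhd e v].

Definition mset_fst (c : color) : color := mset (map (child 0) (children c)).

Lemma mset_fst_eb_nbhd (V : finType) (e : rel V) (k : nat) (v : V) :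
  mset_fst (eb_nbhd e k.+1 v) = eb_nbhd e k v.
Proof. by rewrite /mset_fst mset_map_children_mset -map_comp. Qed.

Lemma size_children_eb_nbhd (V : finType) (e : rel V) (k : nat) (v : V) :
  size (children (eb_nbhd e k v)) = size (nbhd e v).
Proof. by rewrite /children size_sort size_map. Qed.

Lemma child3_eb (V : finType) (e : rel V) (k : nat) (u v : V) :
  child 3 (eb e k.+1 u v) = eb_nbhd e k v.
Proof. by []. Qed.

Lemma child2_eb (V : finType) (e : rel V) (k : nat) (u v : V) :
  child 2 (eb e k.+1 u v) =
  mset [seq cpair (eb e k u y) (eb e k v y) | y <- [seq y <- nbhd e u | e v y]].
Proof. by []. Qed.

(* Applied to [eb_nbhd e (2l+2) v]: each [x] ranges over the [eb (v, x)], and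
   the [p] over the pairs [(eb (v, y), eb (x, y))] for the common neighbours [y]
   of [v] and [x]; [child 3] extracts neighbourhood multisets one level down. *)
Fixpoint nc_decode (l : nat) (c : color) : color :=
  if l is l'.+1 then
    ctuple [:: nc_decode l' (mset_fst (mset_fst c));
               mset [seq nc_decode l' (mset_fst (child 3 x)) | x <- children c];
               mset (flatten
                 [seq [seq cpair (nc_decode l' (mset_fst (child 3 x)))
                                 (nc_decode l' (child 3 (child 1 p)))
                      | p <- children (child 2 x)]
                 | x <- children c])]
  else cinit.

Lemma nc_decode_eb_nbhd (V : finType) (e : rel V) (l : nat) (v : V) :
  nc e l v = nc_decode l (eb_nbhd e l.*2 v).
Proof.
elim: l v => [|l IH] v //; rewrite doubleS.
have nc_nbhd x : nc_decode l (mset_fst (child 3 (eb e l.*2.+2 v x))) = nc e l x.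
  by rewrite child3_eb mset_fst_eb_nbhd IH.
rewrite [LHS]/= [RHS]/=; congr (ctuple [:: _; _; _]).
- by rewrite !mset_fst_eb_nbhd IH.
- rewrite /eb_nbhd mset_map_children_mset -map_comp.
  by congr mset; apply: eq_map => x; rewrite /= nc_nbhd.
- apply/mset_perm; rewrite perm_sym enum_triangles_at map_allpairs /eb_nbhd.
  apply: perm_trans (perm_allpairs_dep _ (perm_children_mset _)
                       (fun _ _ => perm_refl _)) _.
  rewrite allpairs_mapl.
  apply: perm_trans (perm_allpairs_dep _ (perm_refl _) _) _.
    by move=> x _; rewrite child2_eb; exact: perm_children_mset.
  rewrite allpairs_mapr; apply/permP => a; congr count.
  apply: eq_allpairs => x y.
  by rewrite child1_cpair child3_eb nc_nbhd -IH.
Qed.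

Lemma count_mem_edge_src (V : finType) (e : rel V) (T : eqType) (f : V -> T)
    (w : T -> nat) :
  (forall x, size (nbhd e x) = w (f x)) ->
  forall c, count_mem c [seq f p.1 | p <- enum [pred p : V * V | e p.1 p.2]]
            = count_mem c (map f (enum V)) * w c.
Proof.
move=> deg_w c.
by rewrite enum_edges map_allpairs (count_allpairs_const _ deg_w).
Qed.

Lemma perm_vertex_colors_of_edge_src (V W : finType) (eG : rel V) (eH : rel W)
    (T : eqType) (fG : V -> T) (fH : W -> T) (w : T -> nat) :
  (forall v, exists u, eG v u) -> (forall v, exists u, eH v u) ->
  (forall x, size (nbhd eG x) = w (fG x)) ->
  (forall y, size (nbhd eH y) = w (fH y)) ->
  perm_eq [seq fG p.1 | p <- enum [pred p : V * V | eG p.1 p.2]]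
          [seq fH p.1 | p <- enum [pred p : W * W | eH p.1 p.2]] ->
  perm_eq (map fG (enum V)) (map fH (enum W)).
Proof.
move=> nG nH degG degH /permP edges; apply: (@perm_eq_weighted _ w).
  move=> _ /[!mem_cat] /orP[] /mapP[x _ ->].
  - by rewrite -degG; exact: nbhd_gt0 (nG x).
  - by rewrite -degH; exact: nbhd_gt0 (nH x).
move=> c.
by rewrite -(count_mem_edge_src degG) -(count_mem_edge_src degH) edges.
Qed.

Theorem mainTheorem3 (V W : finType) (eG : rel V) (eH : rel W) :
  simple_graph eG -> simple_graph eH ->
  nc_distinguishable eG eH -> eb_distinguishable eG eH.
Proof.
move=> [_ [_ nG]] [_ [_ nH]] [l nc_neq]; right; exists l.*2.+1 => eb_eq.
apply: nc_neq.
(* [child 1 (eb e k.+1 u v)] is [eb_nbhd e k u] by conversion. *)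
have edges :
    perm_eq [seq eb_nbhd eG l.*2 p.1 | p <- enum [pred p : V * V | eG p.1 p.2]]
            [seq eb_nbhd eH l.*2 p.1 | p <- enum [pred p : W * W | eH p.1 p.2]].
  by have := perm_map (child 1) (mset_inj eb_eq); rewrite -!map_comp.
have vertices : perm_eq [seq eb_nbhd eG l.*2 x | x <- enum V]
                        [seq eb_nbhd eH l.*2 y | y <- enum W].
  apply: (perm_vertex_colors_of_edge_src (w := size \o children) nG nH _ _ edges).
  - by move=> x; rewrite /= size_children_eb_nbhd.
  - by move=> y; rewrite /= size_children_eb_nbhd.
rewrite /nc_graph (eq_map (nc_decode_eb_nbhd eG l)).
rewrite (eq_map (nc_decode_eb_nbhd eH l)).
rewrite (map_comp (nc_decode l) (eb_nbhd eG l.*2)) (map_comp _ (eb_nbhd eH l.*2)).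
exact/mset_perm/perm_map.
Qed.
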